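(* Let $N=1$ (a single qubit, so the qubit string is omitted and we write $\mathbf{T}^{(k)}_{\mu}(\vec n)$). Let $k\ge 3$, let $\vec n=(n_1,\dots,n_k)$ be a window string with $L\ge n_1\ge\cdots\ge n_k\ge 1$, and let $\mu=(\mu_1,\dots,\mu_{k-1})\in\{0,1\}^{k-1}$. Suppose $\vec n$ contains a ''3-streak'', i.e. there is an index $i$ with $2\le i\le k-1$ and $n_{i-1}=n_i=n_{i+1}$. Let $\vec n'$ be the length-$(k-2)$ string obtained from $\vec n$ by deleting the entries $n_{i-1}$ and $n_i$, and let $\mu'\in\{0,1\}^{k-3}$ be obtained from $\mu$ by deleting its $(i-1)$-th and $i$-th entries. Then there is a scalar $c$, depending only on $k$, $i$ and $\mu$ (and not on the unitaries $U_1,\dots,U_L$ nor on $\tilde O$), such that $$\mathbf{T}^{(k)}_{\mu}(\vec n)=c\,\mathbf{T}^{(k-2)}_{\mu'}(\vec n').$$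
   Context: Fix integers $L\ge 1$ and $N\ge 1$, and a set $Q$ of $N$ qubit labels. For $q\in Q$ let $\sigma_z^{[q]}$ denote the Pauli-$Z$ operator acting on qubit $q$ tensored with the identity on all other qubits of $(\mathbb{C}^2)^{\otimes N}$. (Digital control) Let $U_1,\dots,U_L$ be arbitrary unitaries on $(\mathbb{C}^2)^{\otimes N}$ ($U_n$ is the control propagator, constant on the $n$-th time window), and let $\tilde O$ be an arbitrary Hermitian unitary operator on $(\mathbb{C}^2)^{\otimes N}$ (the toggling-frame observable). For $q\in Q$ and $n\in\{1,\dots,L\}$ define $\tilde h_q(n)=U_n^\dagger\sigma_z^{[q]}U_n$ and $\bar h_q(n)=-\tilde O^{-1}\tilde h_q(n)\tilde O$. For $k\ge1$, a window string $\vec n=(n_1,\dots,n_k)$ with $L\ge n_1\ge\cdots\ge n_k\ge1$, a qubit string $\vec q=(q_1,\dots,q_k)\in Q^k$ and a sign string $\mu\in\{0,1\}^{k-1}$, the (window-framed) control tensor is $$\mathbf{T}^{(k)}_{\vec q;\mu}(\vec n)=\sum_{b\in\{0,1\}^k}(-1)^{\sum_{j=1}^{k-1}\mu_j b_{j+1}}\Big(\prod^{\downarrow}_{i:\,b_i=1}\bar h_{q_i}(n_i)\Big)\Big(\prod^{\uparrow}_{i:\,b_i=0}\tilde h_{q_i}(n_i)\Big),$$ where $\prod^{\downarrow}$ is the ordered product with the index $i$ decreasing from left to right, $\prod^{\uparrow}$ is the ordered product with $i$ increasing from left to right, and an empty product is the identity. When $N=1$ the qubit string is omitted and we write $\mathbf{T}^{(k)}_{\mu}(\vec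 n)$. *)

From HB Require Import structures.
From mathcomp Require Import all_boot all_order all_algebra.
Set Implicit Arguments. Unset Strict Implicit. Unset Printing Implicit Defensive.
Import Order.TTheory GRing.Theory Num.Theory.
Local Open Scope ring_scope.

(* Single qubit (N = 1): operators are 2x2 matrices over a numeric closed
   field C (e.g. the complex numbers). *)

Definition adjmx {C : numClosedFieldType} (A : 'M[C]_2) : 'M[C]_2 :=
  (map_mx Num.conj A)^T.

Definition unitary_mx {C : numClosedFieldType} (A : 'M[C]_2) : Prop :=
  adjmx A *m A = 1%:M /\ A *m adjmx A = 1%:M.

Definition hermitian_mx {C : numClosedFieldType} (A : 'M[C]_2) : Prop :=
  adjmx A = A.

Definition sigmaz {C : numClosedFieldType} : 'M[C]_2 :=
  \matrix_(i < 2, j < 2) (if i == j then (if i == 0 :> nat then 1 else -1) else 0).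

(* \tilde h(n) = U_n^dagger sigma_z U_n  (windows indexed by nat, 1..L) *)
Definition htilde {C : numClosedFieldType} (U : nat -> 'M[C]_2) (m : nat) : 'M[C]_2 :=
  adjmx (U m) *m sigmaz *m U m.

Definition hbar {C : numClosedFieldType} (U : nat -> 'M[C]_2) (O : 'M[C]_2) (m : nat)
  : 'M[C]_2 :=
  - (invmx O *m htilde U m *m O).

(* Control tensor T^{(k)}_mu(n) with k = size n, entries 0-indexed:
   n = [n_1; ...; n_k], mu = [mu_1; ...; mu_{k-1}], b : 'I_k -> bool with
   b i standing for b_{i+1}.  The sign is (-1)^{sum_{j=1}^{k-1} mu_j b_{j+1}},
   written with the 0-based index j (= paper's j+1) ranging over 1..k-1. *)
Definition ctensor {C : numClosedFieldType} (U : nat -> 'M[C]_2) (O : 'M[C]_2)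
  (n : seq nat) (mu : seq bool) : 'M[C]_2 :=
  \sum_(b : {ffun 'I_(size n) -> bool})
     ((-1) ^+ (\sum_(j < size n | (0 < j)%N)
                  (nth false mu j.-1 && b j : nat)))%N
     *: ((\prod_(i <- rev (enum 'I_(size n)) | b i) hbar U O (nth 0%N n i))
         *m (\prod_(i < size n | ~~ b i) htilde U (nth 0%N n i))).

(* delete the entries with 1-based positions i-1 and i *)
Definition delete2 {T : Type} (i : nat) (s : seq T) : seq T :=
  take (i - 2) s ++ drop i s.

From HB Require Import structures.
From mathcomp Require Import all_boot all_order all_algebra ring zify.
Set Implicit Arguments. Unset Strict Implicit. Unset Printing Implicit Defensive.
Import Order.TTheory GRing.Theory Num.Theory.
Local Open Scope ring_scope.

(* Splitting the sum over [b] according to its last bit, a summand either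
   gets [\tilde h(n_k)] appended on the right or [(-1)^mu \bar h(n_k)]
   prepended on the left.  Hence [T^(k)] is the iterate, starting from [1], of
   the maps [X |-> X * B_j + a_j *: (A_j * X)] with [A_j = \bar h(n_j)],
   [B_j = \tilde h(n_j)] and [a_j = +-1].  On a 3-streak the three maps share
   the involutions [A] and [B], and composing them multiplies the image of the
   first one by [1 + ab + ac + bc] (using [a^2 = 1]), a scalar determined by
   [mu] alone. *)

Definition ffun_rcons (T : Type) k (f : {ffun 'I_k -> T}) (x : T) : {ffun 'I_k.+1 -> T} :=
  [ffun i => if unlift ord_max i is Some j then f j else x].

Lemma ffun_rcons_widen (T : Type) k (f : {ffun 'I_k -> T}) x (j : 'I_k) :
  ffun_rcons f x (widen_ord (leqnSn k) j) = f j.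
Proof.
have -> : widen_ord (leqnSn k) j = lift ord_max j.
  by apply: val_inj; rewrite /= /bump leqNgt ltn_ord.
by rewrite ffunE liftK.
Qed.

Lemma ffun_rcons_max (T : Type) k (f : {ffun 'I_k -> T}) x :
  ffun_rcons f x ord_max = x.
Proof. by rewrite ffunE unlift_none. Qed.

Lemma big_ffun_rcons (R : Type) (idx : R) (op : Monoid.com_law idx) (T : finType) k
    (F : {ffun 'I_k.+1 -> T} -> R) :
  \big[op/idx]_g F g =
  \big[op/idx]_(f : {ffun 'I_k -> T}) \big[op/idx]_x F (ffun_rcons f x).
Proof.
rewrite pair_big (reindex (fun p => ffun_rcons p.1 p.2)) //=.
exists (fun g => ([ffun j => g (widen_ord (leqnSn k) j)], g ord_max)).
  move=> [f x] _; rewrite ffun_rcons_max; congr (_, _).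
  by apply/ffunP => j; rewrite ffunE ffun_rcons_widen.
move=> g _; apply/ffunP => i; rewrite ffunE /=.
case: unliftP => [j ->|->] //; rewrite ffunE; congr (g _).
by apply: val_inj; rewrite /= /bump leqNgt ltn_ord.
Qed.

Section TwoSidedRecursion.
Variables (R : comNzRingType) (V : algType R).

Definition ctstep (X : V) (t : R * V * V) : V :=
  let: (a, A, B) := t in X * B + a *: (A * X).

Section Involutions.
Variables (A B X : V).
Hypotheses (A2 : A * A = 1) (B2 : B * B = 1).

Lemma ctstep_span_odd (x y c : R) :
  ctstep (x *: (X * B) + y *: (A * X)) (c, A, B) =
  (x + c * y) *: X + (y + c * x) *: (A * X * B).
Proof.
rewrite /= mulrDl mulrDr -!scalerAl -!scalerAr -!mulrA B2 mulr1 !mulrA A2 mul1r.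
by rewrite !scalerDr !scalerA !scalerDl [_ + (c * y) *: _]addrC addrACA.
Qed.

Lemma ctstep_span_even (x y c : R) :
  ctstep (x *: X + y *: (A * X * B)) (c, A, B) =
  (x + c * y) *: (X * B) + (y + c * x) *: (A * X).
Proof.
rewrite /= mulrDl mulrDr -!scalerAl -!scalerAr -!mulrA B2 mulr1 !mulrA A2 mul1r.
by rewrite !scalerDr !scalerA !scalerDl [_ + (c * y) *: _]addrC addrACA.
Qed.

Lemma ctstep3_collapse (a b c : R) : a * a = 1 ->
  ctstep (ctstep (ctstep X (a, A, B)) (b, A, B)) (c, A, B) =
  (1 + a * b + a * c + b * c) *: ctstep X (a, A, B).
Proof.
move=> a2; have -> : ctstep X (a, A, B) = 1 *: (X * B) + a *: (A * X) by rewrite scale1r.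
rewrite ctstep_span_odd ctstep_span_even scalerDr !scalerA; congr (_ *: _ + _ *: _).
  by ring.
by transitivity (a + a * a * (b + c) + a * b * c); [rewrite a2 | ]; ring.
Qed.
End Involutions.

Lemma foldl_ctstepZ (c : R) (X : V) ts :
  foldl ctstep (c *: X) ts = c *: foldl ctstep X ts.
Proof.
elim: ts X => [|[[a A] B] ts IHts] X //=; rewrite -IHts; congr foldl.
by rewrite scalerDr -scalerAl -scalerAr !scalerA mulrC.
Qed.

Variables (a : nat -> R) (A B : nat -> V).

Definition ctdata k : seq (R * V * V) := [seq (a j, A j, B j) | j <- iota 0 k].

Lemma ctdataS k : ctdata k.+1 = rcons (ctdata k) (a k, A k, B k).
Proof. by rewrite /ctdata -addn1 iotaD map_cat cats1. Qed.

Definition signed_term k (b : {ffun 'I_k -> bool}) : V :=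
  (\prod_(j < k) if b j then a j else 1) *:
  ((\prod_(j <- rev (enum 'I_k) | b j) A j) * \prod_(j < k | ~~ b j) B j).

Lemma signed_term_rcons k (f : {ffun 'I_k -> bool}) x :
  signed_term (ffun_rcons f x) =
  if x then a k *: (A k * signed_term f) else signed_term f * B k.
Proof.
rewrite /signed_term big_ord_recr enum_ordSr rev_rcons big_cons -map_rev big_map.
rewrite [\prod_(j < k.+1 | _) _]big_mkcond big_ord_recr /= !ffun_rcons_max.
under [\prod_(i < k) _]eq_bigr do rewrite ffun_rcons_widen.
under [\prod_(j <- rev _ | _) _]eq_bigl do rewrite ffun_rcons_widen.
under [\prod_(i < k) (if ~~ _ then _ else _)]eq_bigr do rewrite ffun_rcons_widen.
rewrite [\prod_(j < k | ~~ f j) _]big_mkcond.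
case: x => /=; rewrite !mulr1.
  by rewrite -scalerAr scalerA mulrC mulrA.
by rewrite -scalerAl mulrA.
Qed.

Lemma sum_signed_term k :
  \sum_(b : {ffun 'I_k -> bool}) signed_term b = foldl ctstep 1 (ctdata k).
Proof.
elim: k => [|k IHk].
  rewrite (big_pred1 [ffun => false]) => [|f]; last by apply/esym/eqP/ffunP => -[].
  by rewrite /signed_term enum_ord0 !big_ord0 big_nil scale1r mulr1.
rewrite ctdataS foldl_rcons -IHk big_ffun_rcons /=.
rewrite mulr_suml mulr_sumr scaler_sumr -big_split /=.
by apply: eq_bigr => f _; rewrite big_bool /= !signed_term_rcons addrC.
Qed.

Lemma take_ctdata m k : (m <= k)%N -> take m (ctdata k) = ctdata m.
Proof. by move=> le_mk; rewrite /ctdata -map_take take_iota (minn_idPl le_mk). Qed.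

Lemma foldl_ctdata_collapse k p :
  (p.+3 <= k)%N ->
  A p.+1 = A p -> A p.+2 = A p -> B p.+1 = B p -> B p.+2 = B p ->
  A p * A p = 1 -> B p * B p = 1 -> a p * a p = 1 ->
  foldl ctstep 1 (ctdata k) =
  (1 + a p * a p.+1 + a p * a p.+2 + a p.+1 * a p.+2) *:
    foldl ctstep 1 (take p.+1 (ctdata k) ++ drop p.+3 (ctdata k)).
Proof.
move=> lt_pk A1 A2 B1 B2 AA BB aa.
rewrite -{1}(cat_take_drop p.+3 (ctdata k)) !foldl_cat -foldl_ctstepZ; congr foldl.
rewrite !take_ctdata ?(ltnW (ltnW lt_pk)) ?(ltnW lt_pk) // !ctdataS !foldl_rcons.
by rewrite A1 A2 B1 B2 ctstep3_collapse.
Qed.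
End TwoSidedRecursion.
Arguments ctstep {R V}.
Arguments ctdata {R V}.

Definition ctsign (R : pzRingType) (mu : seq bool) (j : nat) : R :=
  if j is j'.+1 then (-1) ^+ nth false mu j' else 1.

Lemma ctsign_mul_id (R : pzRingType) mu j : ctsign R mu j * ctsign R mu j = 1.
Proof. by case: j => [|j] /=; rewrite ?mulr1 // -signr_addb addbb. Qed.

Lemma nth_delete2 (T : Type) (x0 : T) (s : seq T) p j :
  nth x0 (delete2 p.+2 s) j = nth x0 s (if (j < p)%N then j else j.+2).
Proof.
rewrite /delete2 subn2 nth_cat size_take /=.
case: (ltnP p (size s)) => [lt_ps|le_sp]; case: ltnP => [lt_jp|le_pj].
- by rewrite nth_take.
- by rewrite nth_drop; congr nth; lia.
- by rewrite take_oversize // (leq_trans lt_jp le_sp).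
- rewrite (nth_default x0 (s := drop _ _)) ?size_drop; last lia.
  by rewrite nth_default //; case: ifP => _; lia.
Qed.

Lemma ctsign_delete2 (R : pzRingType) mu p j :
  ctsign R (delete2 p.+2 mu) j = ctsign R mu (if (j <= p)%N then j else j.+2).
Proof.
by case: j => [|j] //=; rewrite nth_delete2; case: ifP.
Qed.

Lemma map_iota_skip2 (T : Type) (F : nat -> T) k p : (p.+3 <= k)%N ->
  [seq F (if (j <= p)%N then j else j.+2) | j <- iota 0 (k - 2)] =
  take p.+1 [seq F j | j <- iota 0 k] ++ drop p.+3 [seq F j | j <- iota 0 k].
Proof.
move=> lt_pk; have x0 := F 0%N.
have size_take1 : size (take p.+1 [seq F j | j <- iota 0 k]) = p.+1.
  by rewrite size_takel // size_map size_iota; lia.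
apply: (@eq_from_nth _ x0).
  by rewrite size_cat size_take1 size_drop !size_map !size_iota; lia.
move=> j; rewrite size_map size_iota => lt_jk.
rewrite nth_cat size_take1 (nth_map 0%N) ?size_iota // nth_iota //.
case: ltnP => [lt_jp|le_pj].
  rewrite nth_take // (nth_map 0%N) ?size_iota ?nth_iota ?add0n; try lia.
  by rewrite -ltnS lt_jp.
rewrite nth_drop (nth_map 0%N) ?size_iota ?nth_iota ?add0n; try lia.
by rewrite leqNgt le_pj; congr F; lia.
Qed.

Section SingleQubit.
Variable C : numClosedFieldType.
Implicit Types (U : nat -> 'M[C]_2) (O : 'M[C]_2) (n : seq nat) (mu : seq bool).

Lemma sigmaz_mul_id : sigmaz *m sigmaz = 1%:M :> 'M[C]_2.
Proof.
apply/matrixP => i j; rewrite !mxE !big_ord_recl big_ord0 !mxE.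
by case: i => [[|[|i]] Hi] //; case: j => [[|[|j]] Hj] //=; rewrite ?mxE /=; ring.
Qed.

Lemma htilde_mul_id U m : unitary_mx (U m) -> htilde U m * htilde U m = 1.
Proof.
move=> [UadjU UUadj]; rewrite -mulmxE -idmxE /htilde -!mulmxA.
rewrite (mulmxA (U m) (adjmx (U m))) UUadj mul1mx.
by rewrite (mulmxA sigmaz sigmaz) sigmaz_mul_id mul1mx.
Qed.

Lemma hbar_mul_id U O m :
  unitary_mx (U m) -> unitary_mx O -> hbar U O m * hbar U O m = 1.
Proof.
move=> /htilde_mul_id hh [OadjO _]; have O_unit := (mulmx1_unit OadjO).2.
rewrite /hbar mulrNN; move: (htilde U m) hh => h hh.
rewrite -mulmxE -idmxE -!mulmxA (mulmxA O (invmx O)) mulmxV // mul1mx.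
by rewrite (mulmxA h) mulmxE hh mul1r -mulmxE mulVmx.
Qed.

Definition window_data U O n mu :=
  ctdata (ctsign C mu) (fun j => hbar U O (nth 0%N n j))
    (fun j => htilde U (nth 0%N n j)) (size n).

Lemma ctensor_foldl U O n mu :
  ctensor U O n mu = foldl ctstep 1 (window_data U O n mu).
Proof.
rewrite -sum_signed_term; apply: eq_bigr => b _; rewrite mulmxE; congr (_ *: _).
rewrite -prodrXr big_mkcond.
by apply: eq_bigr => -[[|j] lt_jn] _; case: (b _); rewrite /= ?andbT ?andbF.
Qed.

Lemma window_data_delete2 U O n mu p :
  (p.+3 <= size n)%N -> nth 0%N n p.+2 = nth 0%N n p ->
  window_data U O (delete2 p.+2 n) (delete2 p.+2 mu) =
  take p.+1 (window_data U O n mu) ++ drop p.+3 (window_data U O n mu).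
Proof.
move=> lt_pn eq_n; rewrite /window_data /ctdata -map_iota_skip2 //.
have -> : size (delete2 p.+2 n) = (size n - 2)%N.
  by rewrite size_cat size_take size_drop; case: ifP; lia.
apply: eq_map => j; rewrite ctsign_delete2 !nth_delete2.
by case: ltngtP => // ->; rewrite eq_n.
Qed.
End SingleQubit.

Theorem proposition1 (C : numClosedFieldType) (k i : nat) (mu : seq bool) :
  (3 <= k)%N -> size mu = k.-1 -> (2 <= i <= k - 1)%N ->
  exists c : C,
    forall (L : nat) (U : nat -> 'M[C]_2) (O : 'M[C]_2) (n : seq nat),
      (forall m, (1 <= m <= L)%N -> unitary_mx (U m)) ->
      hermitian_mx O -> unitary_mx O ->
      size n = k ->
      sorted (fun a b => (b <= a)%N) n ->
      all (fun m => (1 <= m <= L)%N) n ->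
      nth 0%N n (i - 2) = nth 0%N n (i - 1) ->
      nth 0%N n (i - 1) = nth 0%N n i ->
      ctensor U O n mu = c *: ctensor U O (delete2 i n) (delete2 i mu).
Proof.
move=> _ _ /andP[le2i leik].
have [p def_i] : exists p, i = p.+2 by exists (i - 2)%N; lia.
subst i.
pose a := ctsign C mu.
exists (1 + a p * a p.+1 + a p * a p.+2 + a p.+1 * a p.+2).
move=> L U O n unitary_U _ unitary_O size_n _ windows_in_range.
rewrite subn2 subn1 /= => eq_n01 eq_n12.
have lt_pn : (p.+3 <= size n)%N by lia.
have eq_n2 : nth 0%N n p.+2 = nth 0%N n p by rewrite -eq_n12.
have unitary_Up : unitary_mx (U (nth 0%N n p)).
  by apply: unitary_U; apply: (all_nthP 0%N windows_in_range); lia.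
rewrite !ctensor_foldl window_data_delete2 //.
apply: foldl_ctdata_collapse; rewrite //= -?eq_n01 ?eq_n2 //.
- exact: hbar_mul_id.
- exact: htilde_mul_id.
- exact: ctsign_mul_id.
Qed.
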